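(* Let $\varphi>0$, $w^{\max}>0$, $O^{\max}>0$, $S^{\max}>0$, $p_B^{\max}>0$, $\Delta p_B\ge 0$, $J^{\max}>0$ with $J^{\max}\ge p_B^{\max}+\Delta p_B$ and $O^{\max}\ge p_B^{\max}+\Delta p_B$. Set $\theta=\varphi V+O^{\max}$ with $$0<V\le\frac{S^{\max}-w^{\max}-O^{\max}}{\varphi}.$$ Consider the battery dynamics $S(t+1)=S(t)-O(t)+\delta(t)w(t)$, $t=0,1,2,\dots$, with $S(0)\in[0,S^{\max}]$, harvested energy $w(t)\in[0,w^{\max}]$, and let $p_B^*(t)\in[0,p_B^{\max}]$ be the base-station transmit power at slot $t$. Suppose at each slot the quantities $J(t)$ (grid energy), $O(t)$ (energy withdrawn from the battery) and $\delta(t)\in[0,1]$ are chosen by the rule: 1) if $S(t)\ge\theta-\varphi V$, then $J(t)=0$, $O(t)=\min\{p_B^*(t)+\Delta p_B,O^{\max}\}$, and $\delta(t)=1$ if $0\le S(t)<\theta$, $\delta(t)=0$ otherwise; 2) if $S(t)<\theta-\varphi V$, then $J(t)=\min\{p_B^*(t)+\Delta p_B,J^{\max}\}$, $O(t)=\max\{0,p_B^*(t)+\Delta p_B-J(t)\}$, $\delta(t)=1$. Then $S(t)\in[0,S^{\max}]$ for all $t$.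
   Context: Setting: a base station powered by the grid and by a renewable source with a storage battery of capacity $S^{\max}$; $S(t)$ is the battery energy level, $w(t)$ the harvested renewable energy in slot $t$ (of which the fraction $\delta(t)$ is stored), $O(t)$ the energy drawn from the battery (maximum discharge rate $O^{\max}$), $J(t)$ the energy drawn from the grid for the BS, $\Delta p_B$ the static power consumption of the BS and $p_B^*(t)$ the BS transmit power chosen at slot $t$ by the resource allocation step (which satisfies the total power constraint $p_B^*(t)\le p_B^{\max}$). *)

From Stdlib Require Import Reals.
Open Scope R_scope.

Definition energy_rule (phi V Omax Jmax dpB : R)
  (s pB J O delta : R) : Prop :=
  let theta := phi * V + Omax in
  (s >= theta - phi * V ->
     J = 0 /\ O = Rmin (pB + dpB) Omax /\
     ((0 <= s /\ s < theta) -> delta = 1) /\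
     (~ (0 <= s /\ s < theta) -> delta = 0)) /\
  (s < theta - phi * V ->
     J = Rmin (pB + dpB) Jmax /\ O = Rmax 0 (pB + dpB - J) /\ delta = 1).

(* Below [theta - phi V = Omax] the grid covers the
   whole demand [pB + dpB] and the battery only charges, so it stays under [Omax + wmax].
   Above [Omax] the battery pays the demand, which it can afford, and charges only while
   below [theta], so it stays under [theta + wmax]; the choice of [V] makes both bounds
   at most [Smax]. *)
From Stdlib Require Import Reals Lra.
Open Scope R_scope.

Section EnergyRule.

Context {phi V Omax Jmax dpB s pB J O delta : R}.

Hypothesis Hrule : energy_rule phi V Omax Jmax dpB s pB J O delta.

Lemma energy_rule_grid_branch :
  s < Omax -> pB + dpB <= Jmax -> O = 0 /\ delta = 1.
Proof.
  intros Hs Hdemand.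
  destruct Hrule as [_ Hlow]; cbv zeta in Hlow.
  destruct Hlow as [HJ [HO Hdelta]]; [lra|].
  rewrite Rmin_left in HJ by exact Hdemand.
  rewrite HO, HJ, Rmax_left by lra.
  split; [ring | exact Hdelta].
Qed.

Lemma energy_rule_battery_branch :
  Omax <= s -> 0 <= pB + dpB <= Omax ->
  O = pB + dpB /\ (s < phi * V + Omax -> delta = 1) /\
  (phi * V + Omax <= s -> delta = 0).
Proof.
  intros Hs Hdemand.
  destruct Hrule as [Hhigh _]; cbv zeta in Hhigh.
  destruct Hhigh as [_ [HO [Hcharge Hidle]]]; [lra|].
  rewrite Rmin_left in HO by lra.
  split; [exact HO|].
  split; intros Htheta.
  - apply Hcharge; lra.
  - apply Hidle; lra.
Qed.

Lemma energy_rule_battery_bounds {w wmax Smax : R} :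
  0 <= pB + dpB <= Omax -> pB + dpB <= Jmax ->
  0 <= w <= wmax -> phi * V + Omax + wmax <= Smax -> 0 <= phi * V ->
  0 <= s <= Smax -> 0 <= s - O + delta * w <= Smax.
Proof.
  intros Hdemand HJmax Hw HSmax HphiV Hs.
  destruct (Rlt_le_dec s Omax) as [Hlow|Hhigh].
  - destruct (energy_rule_grid_branch Hlow HJmax) as [-> ->]; lra.
  - destruct (energy_rule_battery_branch Hhigh Hdemand) as [-> [Hcharge Hidle]].
    destruct (Rlt_le_dec s (phi * V + Omax)) as [Htheta|Htheta].
    + rewrite (Hcharge Htheta); lra.
    + rewrite (Hidle Htheta); lra.
Qed.

End EnergyRule.

Lemma Rmult_le_of_le_div (c x y : R) : 0 < c -> x <= y / c -> c * x <= y.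
Proof.
  intros Hc Hx.
  apply Rmult_le_compat_l with (r := c) in Hx; [|lra].
  replace (c * (y / c)) with y in Hx by (field; lra).
  exact Hx.
Qed.

Theorem theorem2
  (phi wmax Omax Smax pBmax dpB Jmax V : R)
  (S w pB J O delta : nat -> R)
  (Hphi : 0 < phi) (Hwmax : 0 < wmax) (HOmax : 0 < Omax) (HSmax : 0 < Smax)
  (HpBmax : 0 < pBmax) (HdpB : 0 <= dpB) (HJmax : 0 < Jmax)
  (HJmax2 : Jmax >= pBmax + dpB) (HOmax2 : Omax >= pBmax + dpB)
  (HV0 : 0 < V) (HV1 : V <= (Smax - wmax - Omax) / phi)
  (HS0 : 0 <= S 0%nat <= Smax)
  (Hw : forall t, 0 <= w t <= wmax)
  (HpB : forall t, 0 <= pB t <= pBmax)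
  (Hdelta : forall t, 0 <= delta t <= 1)
  (Hrule : forall t, energy_rule phi V Omax Jmax dpB (S t) (pB t) (J t) (O t) (delta t))
  (Hdyn : forall t, S (Datatypes.S t) = S t - O t + delta t * w t) :
  forall t, 0 <= S t <= Smax.
Proof.
  assert (HphiV : phi * V <= Smax - wmax - Omax) by (apply Rmult_le_of_le_div; assumption).
  assert (HphiV0 : 0 <= phi * V) by (apply Rmult_le_pos; lra).
  induction t as [|t IH]; [exact HS0|].
  rewrite Hdyn.
  specialize (HpB t).
  apply (energy_rule_battery_bounds (Hrule t) (wmax := wmax)); auto; lra.
Qed.
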